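(* Let $n\ge 2$. Then $\Gamma^0=\mathrm{C}^\times$, and $$\Gamma^n=\begin{cases}\mathrm{C}^\times, & n \text{ odd},\\ \mathrm{C}^{\times(0)}\cup\mathrm{C}^{\times(1)}, & n\text{ even}.\end{cases}$$
   Context: Let $\mathrm{C}$ be either the real Clifford algebra $C\ell_{p,q}$ with $p+q=n$, or the complex Clifford algebra $C\ell(\mathbb{C}^n)$. It has identity $e$ and generators $e_1,\dots,e_n$ satisfying $e_ae_b+e_be_a=2\eta_{ab}e$. In the real case $\eta=\mathrm{diag}(1,\dots,1,-1,\dots,-1)$ with $p$ entries $+1$ and $q$ entries $-1$. In the complex case $\eta=I_n$. For $a_1<\dots<a_k$ write $e_{a_1\dots a_k}=e_{a_1}\cdots e_{a_k}$. $\mathrm{C}^k$ (grade $k$, $0\le k\le n$) is the span of the $e_{a_1\dots a_k}$ with $k$ indices; $\mathrm{C}^0=\mathrm{span}(e)$. The even subspace is $\mathrm{C}^{(0)}=\bigoplus_{k\text{ even}}\mathrm{C}^k$ and the odd subspace is $\mathrm{C}^{(1)}=\bigoplus_{k\text{ odd}}\mathrm{C}^k$. For any subset $S\subseteq\mathrm{C}$, $S^\times$ denotes the set of elements of $S$ invertible in $\mathrm{C}$; in particular $\mathrm{C}^{\times(j)}:=(\mathrm{C}^{(j)})^\times$. For $k=0,\dots,n$ define $\Gamma^k=\{T\in\mathrm{C}^\times: T\,\mathrm{C}^k\,T^{-1}\subseteq\mathrm{C}^k\}$. *)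

(* Clifford algebras C\ell(K^n, eta) for a diagonal metric
   eta : 'I_n -> K, realised concretely on the basis of blades e_A, A : {set 'I_n}. *)
From HB Require Import structures.
From mathcomp Require Import all_boot all_order all_algebra.
From mathcomp Require Import reals.
From mathcomp Require Import complex.
Set Implicit Arguments. Unset Strict Implicit. Unset Printing Implicit Defensive.
Import Order.TTheory GRing.Theory Num.Theory.
Local Open Scope ring_scope.

(* An element of the Clifford algebra: its coordinates on the blade basis
   e_A = e_{a_1} ... e_{a_k}  (a_1 < ... < a_k, A = {a_1,...,a_k}, e_set0 = e). *)
Definition cl (K : fieldType) (n : nat) := {ffun {set 'I_n} -> K}.

(* e_A e_B = blade_sign A B * e_{A Δ B}:
   (-1)^#{(a,b) | a in A, b in B, b < a} * prod_{i in A ∩ B} eta_ii *)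
Definition blade_sign (K : fieldType) (n : nat) (eta : 'I_n -> K)
    (A B : {set 'I_n}) : K :=
  (-1) ^+ #|[set ab : 'I_n * 'I_n | (ab.1 \in A) && (ab.2 \in B) && (ab.2 < ab.1)%N]|
  * \prod_(i in A :&: B) eta i.

Definition symdiff (n : nat) (A B : {set 'I_n}) : {set 'I_n} :=
  (A :\: B) :|: (B :\: A).

Definition clmul (K : fieldType) (n : nat) (eta : 'I_n -> K) (x y : cl K n) : cl K n :=
  [ffun C => \sum_(A : {set 'I_n}) \sum_(B : {set 'I_n} | symdiff A B == C)
               x A * y B * blade_sign eta A B].

Definition clone (K : fieldType) (n : nat) : cl K n :=
  [ffun A => if A == set0 then 1 else 0].

Definition clinverse (K : fieldType) (n : nat) (eta : 'I_n -> K) (T S : cl K n) : Prop :=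
  clmul eta T S = clone K n /\ clmul eta S T = clone K n.

Definition clunit (K : fieldType) (n : nat) (eta : 'I_n -> K) (T : cl K n) : Prop :=
  exists S, clinverse eta T S.

Definition in_grade (K : fieldType) (n : nat) (k : nat) (x : cl K n) : Prop :=
  forall A : {set 'I_n}, #|A| != k -> x A = 0.

Definition in_even (K : fieldType) (n : nat) (x : cl K n) : Prop :=
  forall A : {set 'I_n}, odd #|A| -> x A = 0.
Definition in_odd (K : fieldType) (n : nat) (x : cl K n) : Prop :=
  forall A : {set 'I_n}, ~~ odd #|A| -> x A = 0.

Definition Gamma (K : fieldType) (n : nat) (eta : 'I_n -> K) (k : nat) (T : cl K n) : Prop :=
  exists S, clinverse eta T S /\
    forall X : cl K n, in_grade k X -> in_grade k (clmul eta (clmul eta T X) S).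

(* Real signature (p,q), p + q = n: eta = diag(1,..,1,-1,..,-1) with p entries +1. *)
Definition real_eta (R : realType) (n p : nat) : 'I_n -> R :=
  fun i => if (i < p)%N then 1 else -1.

Definition complex_eta (R : realType) (n : nat) : 'I_n -> R[i] := fun _ => 1.
Arguments real_eta R n p : clear implicits.
Arguments complex_eta R n : clear implicits.

(* Grade 0 is spanned by
   the identity e, so conjugation by any unit fixes it: Γ^0 = C^×.  Grade n is
   spanned by the pseudoscalar J = e_{1..n}, and moving J across a blade e_B
   costs the sign (-1)^(|B|(n-1)); hence T J = J twist(T) for the linear map
   twist : e_B ↦ (-1)^(|B|(n-1)) e_B.  Consequently a unit T lies in Γ^n iff
   T is an eigenvector of twist.  For n odd, twist is the identity; for n
   even, twist is the grade involution, whose eigenvectors (in characteristic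
   ≠ 2) are exactly the even and the odd elements.  The theorem follows by
   specialising the metric to the real signature (p,q) and to the complex
   identity metric, both of which have non-zero diagonal entries. *)
From HB Require Import structures.
From mathcomp Require Import all_boot all_order all_algebra.
From mathcomp Require Import reals.
From mathcomp Require Import complex.
From mathcomp Require Import zify ring.
Set Implicit Arguments. Unset Strict Implicit. Unset Printing Implicit Defensive.
Import Order.TTheory GRing.Theory Num.Theory.
Local Open Scope ring_scope.

Section Clifford.
Variables (K : fieldType) (n : nat) (eta : 'I_n -> K).

Local Notation sd := (@symdiff n).
Local Notation sg := (blade_sign eta).
Local Notation mul := (clmul eta).

Lemma in_symdiff (A B : {set 'I_n}) x : (x \in sd A B) = (x \in A) (+) (x \in B).
Proof. by rewrite /symdiff !inE; case: (x \in A); case: (x \in B). Qed.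

Lemma symdiffC (A B : {set 'I_n}) : sd A B = sd B A.
Proof. by apply/setP => x; rewrite !in_symdiff addbC. Qed.

Lemma symdiffA (A B C : {set 'I_n}) : sd (sd A B) C = sd A (sd B C).
Proof. by apply/setP => x; rewrite !in_symdiff addbA. Qed.

Lemma symdiff0l (A : {set 'I_n}) : sd set0 A = A.
Proof. by apply/setP => x; rewrite in_symdiff inE. Qed.

Lemma symdiff0r (A : {set 'I_n}) : sd A set0 = A.
Proof. by rewrite symdiffC symdiff0l. Qed.

Lemma symdiffxx (A : {set 'I_n}) : sd A A = set0.
Proof. by apply/setP => x; rewrite in_symdiff inE addbb. Qed.

Lemma symdiffK (A C : {set 'I_n}) : sd A (sd A C) = C.
Proof. by rewrite -symdiffA symdiffxx symdiff0l. Qed.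

Lemma symdiffKr (A C : {set 'I_n}) : sd (sd C A) A = C.
Proof. by rewrite symdiffA symdiffxx symdiff0r. Qed.

Lemma symdiff_inj (A : {set 'I_n}) : injective (sd A).
Proof. by move=> B C e; rewrite -(symdiffK A B) e symdiffK. Qed.

Lemma clmulE (x y : cl K n) C :
  mul x y C = \sum_A x A * y (sd A C) * sg A (sd A C).
Proof.
rewrite ffunE; apply: eq_bigr => A _.
rewrite (big_pred1 (sd A C)) // => B /=.
by apply/eqP/eqP => [<-|->]; rewrite symdiffK.
Qed.

Definition inversions (A B : {set 'I_n}) : nat :=
  #|[set ab : 'I_n * 'I_n | (ab.1 \in A) && (ab.2 \in B) && (ab.2 < ab.1)%N]|.

Lemma inversionsE A B :
  inversions A B = (\sum_a \sum_b ((a \in A) && (b \in B) && (b < a)%N : nat))%N.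
Proof.
rewrite /inversions -sum1_card big_mkcond /= pair_big /=.
by apply: eq_bigr => -[a b] _; rewrite inE /=; case: (_ && _).
Qed.

(* Inversions are additive modulo 2 in each argument with respect to Δ. *)
Lemma inversions_symdiffl A B C :
  (inversions (sd A B) C + inversions (A :&: B) C + inversions (A :&: B) C
   = inversions A C + inversions B C)%N.
Proof.
rewrite !inversionsE -!big_split /=; apply: eq_bigr => a _; rewrite -!big_split /=.
apply: eq_bigr => b _; rewrite in_symdiff !inE.
by case: (a \in A); case: (a \in B); case: (b \in C); case: (b < a)%N.
Qed.

Lemma inversions_symdiffr A B C :
  (inversions A (sd B C) + inversions A (B :&: C) + inversions A (B :&: C)
   = inversions A B + inversions A C)%N.
Proof.
rewrite !inversionsE -!big_split /=; apply: eq_bigr => a _; rewrite -!big_split /=.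
apply: eq_bigr => b _; rewrite in_symdiff !inE.
by case: (a \in A); case: (b \in B); case: (b \in C); case: (b < a)%N.
Qed.

Lemma sign_congr m k m' k' :
  (m + k + k = m' + k' + k')%N -> (-1) ^+ m = (-1) ^+ m' :> K.
Proof.
move=> e; rewrite -signr_odd -[RHS]signr_odd.
suff -> : odd m = odd m' by [].
by have := congr1 odd e; rewrite -!addnA !addnn !oddD !odd_double !addbF.
Qed.

(* blade_sign is a 2-cocycle on the group of subsets: this is exactly the
   associativity of the blade products. *)
Lemma blade_sign_cocycle A B C : sg A B * sg (sd A B) C = sg A (sd B C) * sg B C.
Proof.
rewrite /blade_sign mulrACA [RHS]mulrACA -!exprD; congr (_ * _).
  apply: (@sign_congr _ (inversions (A :&: B) C) _ (inversions A (B :&: C))).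
  have := inversions_symdiffl A B C; have := inversions_symdiffr A B C.
  rewrite /inversions; lia.
rewrite !(big_mkcond (mem (_ :&: _))) -!big_split /=; apply: eq_bigr => i _.
rewrite !inE ?in_symdiff.
by case: (i \in A); case: (i \in B); case: (i \in C); rewrite /= ?mulr1 ?mul1r.
Qed.

Lemma clmulA (x y z : cl K n) : mul (mul x y) z = mul x (mul y z).
Proof.
apply/ffunP => D; rewrite !clmulE.
under eq_bigr do rewrite clmulE !big_distrl /=.
rewrite exchange_big /=; apply: eq_bigr => A _.
rewrite clmulE big_distrr big_distrl /= (reindex_inj (@symdiff_inj A)) /=.
apply: eq_bigr => B _; rewrite symdiffK.
have eD : sd (sd A B) D = sd B (sd A D) by rewrite (symdiffC A) symdiffA.
have := blade_sign_cocycle A B (sd B (sd A D)); rewrite symdiffK -eD => cc.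
transitivity (x A * y B * z (sd (sd A B) D) * (sg A B * sg (sd A B) (sd (sd A B) D))).
  by ring.
by rewrite cc; ring.
Qed.

Definition blade_supported (x : cl K n) (A0 : {set 'I_n}) : Prop :=
  forall A, A != A0 -> x A = 0.

Lemma clmul_supported_l (x y : cl K n) C A0 : blade_supported x A0 ->
  mul x y C = x A0 * y (sd A0 C) * sg A0 (sd A0 C).
Proof.
move=> sx; rewrite clmulE (bigD1 A0) //= big1 ?addr0 // => A /sx ->.
by rewrite !mul0r.
Qed.

Lemma clmul_supported_r (x y : cl K n) C B0 : blade_supported y B0 ->
  mul x y C = x (sd B0 C) * y B0 * sg (sd B0 C) B0.
Proof.
move=> sy; rewrite clmulE (bigD1 (sd B0 C)) //= symdiffKr big1 ?addr0 // => A hA.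
rewrite sy ?mulr0 ?mul0r //; apply: contra hA => /eqP <-.
by rewrite symdiffKr.
Qed.

Lemma blade_sign0r (A : {set 'I_n}) : sg A set0 = 1.
Proof.
rewrite /blade_sign setI0 big_set0 mulr1.
suff -> : [set ab : 'I_n * 'I_n | (ab.1 \in A) && (ab.2 \in set0) && (ab.2 < ab.1)%N]
          = set0 by rewrite cards0 expr0.
by apply/setP => -[a b]; rewrite !inE andbF.
Qed.

Lemma clmul1r (x : cl K n) : mul x (clone K n) = x.
Proof.
apply/ffunP => C; rewrite (@clmul_supported_r _ _ _ set0).
  by rewrite ffunE eqxx mulr1 symdiff0l blade_sign0r mulr1.
by move=> B hB; rewrite ffunE (negbTE hB).
Qed.

Lemma clmul_scalel (x y z : cl K n) C d :
  (forall B, y B = d * x B) -> mul y z C = d * mul x z C.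
Proof.
move=> ey; rewrite !clmulE mulr_sumr; apply: eq_bigr => A _; rewrite ey; ring.
Qed.

(* Every a in D is compared with each of the n - 1 other indices exactly once. *)
Lemma inversions_setT (D : {set 'I_n}) :
  (inversions D setT + inversions setT D = #|D| * n.-1)%N.
Proof.
rewrite !inversionsE [X in (_ + X)%N]exchange_big -big_split /=.
rewrite -sum1_card big_distrl [RHS]big_mkcond /=; apply: eq_bigr => a _.
transitivity (\sum_(b < n) ((a \in D) * (b != a)))%N.
  rewrite -big_split; apply: eq_bigr => b _; rewrite !inE /=.
  case: (a \in D) => //=; rewrite neq_ltn.
  by case: ltnP => h1; case: ltnP => h2 //=; have := ltn_trans h1 h2; rewrite ltnn.
case: (a \in D); last by rewrite big1.
rewrite mul1n (eq_bigr (fun b : 'I_n => if b != a then 1 else 0)%N); last first.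
  by move=> b _; rewrite mul1n; case: (b != a).
by rewrite -big_mkcond /= sum1_card cardC1 card_ord.
Qed.

Lemma blade_sign_setT (D : {set 'I_n}) :
  sg D setT = (-1) ^+ (#|D| * n.-1) * sg setT D.
Proof.
rewrite /blade_sign setIT setTI mulrA -exprD; congr (_ * _).
apply: (@sign_congr _ (inversions setT D) _ 0).
by have := inversions_setT D; rewrite /inversions; lia.
Qed.

(* The twist e_B ↦ (-1)^(|B|(n-1)) e_B: the effect of moving the pseudoscalar
   across an element. *)
Definition twist (T : cl K n) : cl K n :=
  [ffun B : {set 'I_n} => (-1) ^+ (#|B| * n.-1) * T B].

Lemma twist_odd (T : cl K n) (B : {set 'I_n}) : odd n -> twist T B = T B.
Proof.
move=> on; have n_gt0 : (0 < n)%N by case: (n) on.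
rewrite ffunE -signr_odd oddM.
have -> : odd n.-1 = false by move: on; rewrite -{1}(prednK n_gt0) /= => /negbTE.
by rewrite andbF mul1r.
Qed.

Lemma twist_even (T : cl K n) (B : {set 'I_n}) : (0 < n)%N -> ~~ odd n ->
  twist T B = if odd #|B| then - T B else T B.
Proof.
move=> n_gt0 en; rewrite ffunE -signr_odd oddM.
have -> : odd n.-1 by move: en; rewrite -{1}(prednK n_gt0) /= negbK.
by rewrite andbT; case: (odd #|B|); rewrite ?mulN1r ?mul1r.
Qed.

Lemma clmul_pseudoscalar (T X : cl K n) :
  blade_supported X setT -> mul T X = mul X (twist T).
Proof.
move=> sX; apply/ffunP => C.
rewrite (clmul_supported_r _ _ sX) (clmul_supported_l _ _ sX) ffunE blade_sign_setT.
by ring.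
Qed.

Lemma in_grade_top (X : cl K n) : in_grade n X <-> blade_supported X setT.
Proof.
have eT (A : {set 'I_n}) : (#|A| == n) = (A == setT).
  apply/eqP/eqP => [cA | ->]; last by rewrite cardsT card_ord.
  by apply/eqP; rewrite eqEcard subsetT cardsT card_ord cA leqnn.
by split=> hX A; [rewrite -eT | rewrite eT]; exact: hX.
Qed.

(* Grade 0 is spanned by e, which every unit fixes under conjugation. *)
Lemma Gamma0_units (T : cl K n) : Gamma eta 0 T <-> clunit eta T.
Proof.
split; first by case=> S [hS _]; exists S.
case=> S hS; exists S; split => // X hX C hC.
have sX : blade_supported X set0 by move=> A hA; apply: hX; rewrite cards_eq0.
rewrite (@clmul_scalel T _ S C (X set0)); last first.
  by move=> B; rewrite (clmul_supported_r _ _ sX) symdiff0l blade_sign0r mulr1 mulrC.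
case: hS => -> _; rewrite ffunE; case: eqP => [e|]; last by rewrite mulr0.
by move: hC; rewrite e cards0.
Qed.

Definition twist_eigen (T : cl K n) : Prop :=
  exists d, forall B, twist T B = d * T B.

Lemma conj_top_grade_of_eigen (T S : cl K n) : clinverse eta T S ->
  twist_eigen T -> forall X, in_grade n X -> in_grade n (mul (mul T X) S).
Proof.
move=> [TS_1 _] [d hd] X /in_grade_top sX; apply/in_grade_top => C hC.
rewrite (clmul_pseudoscalar _ sX) clmulA (clmul_supported_l _ _ sX).
rewrite (@clmul_scalel T _ S _ d) // TS_1 ffunE.
have -> : (sd setT C == set0) = false.
  by apply/negbTE; apply: contra hC => /eqP e; rewrite -(symdiffK setT C) e symdiff0r.
by rewrite !mulr0 mul0r.
Qed.

Lemma eigen_of_conj_top_grade (T S : cl K n) : (forall i, eta i != 0) ->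
  clinverse eta T S ->
  (forall X, in_grade n X -> in_grade n (mul (mul T X) S)) -> twist_eigen T.
Proof.
move=> eta_nz [_ ST_1] hG.
pose J : cl K n := [ffun A => (A == setT)%:R].
have sJ : blade_supported J setT by move=> A hA; rewrite ffunE (negbTE hA).
have /in_grade_top sY := hG J (proj2 (in_grade_top J) sJ).
have eY : mul (mul (mul T J) S) T = mul J (twist T).
  by rewrite clmulA ST_1 clmul1r (clmul_pseudoscalar _ sJ).
exists (mul (mul T J) S setT) => D.
have sg_nz : sg setT D != 0.
  by rewrite mulf_neq0 ?signr_eq0 //; apply/prodf_neq0 => i _.
have := congr1 (fun f : cl K n => f (sd setT D)) eY.
have J_setT : J setT = 1 by rewrite ffunE eqxx.
rewrite /= (clmul_supported_l _ _ sY) (clmul_supported_l _ _ sJ) symdiffK J_setT mul1r.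
by move/(mulIf sg_nz) ->.
Qed.

Lemma GammaN_twist_eigen (T : cl K n) : (forall i, eta i != 0) ->
  Gamma eta n T <-> clunit eta T /\ twist_eigen T.
Proof.
move=> eta_nz; split.
  by case=> S [hS hG]; split; [exists S | exact: eigen_of_conj_top_grade hS hG].
by case=> -[S hS] hT; exists S; split => //; exact: conj_top_grade_of_eigen.
Qed.

Lemma twist_eigen_even (T : cl K n) : (0 < n)%N -> ~~ odd n -> (2%:R : K) != 0 ->
  twist_eigen T <-> in_even T \/ in_odd T.
Proof.
move=> n_gt0 en two_nz; split.
  case=> d hd.
  have [/existsP [D /andP [eD TD_nz]] | no_even] :=
    boolP [exists D : {set 'I_n}, ~~ odd #|D| && (T D != 0)]; [left | right].
    have d1 : d = 1.
      apply: (mulIf TD_nz); rewrite mul1r -hd twist_even //.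
      by rewrite (negbTE eD).
    move=> A oA; have := hd A; rewrite twist_even // oA d1 mul1r.
    move/eqP; rewrite eq_sym -subr_eq0 opprK -mulr2n -mulr_natr mulf_eq0 (negbTE two_nz) orbF.
    by move/eqP.
  move=> A eA; apply/eqP; apply: contraNT no_even => TA_nz.
  by apply/existsP; exists A; rewrite eA TA_nz.
case=> [evT | odT]; [exists 1 | exists (-1)] => B; rewrite twist_even //.
  by rewrite mul1r; case: ifP => // oB; rewrite evT ?oB ?oppr0.
by rewrite mulN1r; case: ifP => // oB; rewrite odT ?oB ?oppr0.
Qed.

Lemma GammaN_units (T : cl K n) : (0 < n)%N -> (forall i, eta i != 0) ->
  (2%:R : K) != 0 ->
  Gamma eta n T <->
  (if odd n then clunit eta T else clunit eta T /\ (in_even T \/ in_odd T)).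
Proof.
move=> n_gt0 eta_nz two_nz.
have eigenE : twist_eigen T <-> (if odd n then True else in_even T \/ in_odd T).
  case: ifP => on; last exact: twist_eigen_even (negbT on) two_nz.
  by split=> // _; exists 1 => B; rewrite twist_odd // mul1r.
apply: (iff_trans (GammaN_twist_eigen T eta_nz)); case: ifP eigenE => _ eigenE.
  by split=> [[]//|u]; split=> //; apply/eigenE.
by split=> -[u /eigenE e]; split.
Qed.

End Clifford.

Theorem mainTheorem1 (n : nat) (Hn : (2 <= n)%N) :
  (* real Clifford algebra C\ell_{p,q}, p + q = n *)
  (forall (R : realType) (p q : nat), (p + q)%N = n ->
     (forall T : cl R n, Gamma (real_eta R n p) 0 T <-> clunit (real_eta R n p) T) /\
     (forall T : cl R n, Gamma (real_eta R n p) n T <->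
        (if odd n then clunit (real_eta R n p) T
         else clunit (real_eta R n p) T /\ (in_even T \/ in_odd T)))) /\
  (* complex Clifford algebra C\ell(C^n) *)
  (forall (R : realType),
     (forall T : cl R[i] n, Gamma (complex_eta R n) 0 T <-> clunit (complex_eta R n) T) /\
     (forall T : cl R[i] n, Gamma (complex_eta R n) n T <->
        (if odd n then clunit (complex_eta R n) T
         else clunit (complex_eta R n) T /\ (in_even T \/ in_odd T)))).
Proof.
have n_gt0 : (0 < n)%N by apply: leq_trans Hn.
split=> [R p q _ | R]; split=> T; try exact: Gamma0_units.
  apply: GammaN_units => //; last by rewrite pnatr_eq0.
  by move=> i; rewrite /real_eta; case: ifP; rewrite ?oppr_eq0 oner_eq0.
apply: GammaN_units => //; last by rewrite pnatr_eq0.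
by move=> i; rewrite /complex_eta oner_eq0.
Qed.
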